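(* Let $u:[0,b)\to(0,\infty)$ be a solution of $\frac{u''}{1+(u')^2}=\frac{xu'}{2}-\frac u2+\frac{n-1}{u}$ with $u(0)<\sqrt{2(n-1)}$ and $u'(0)<0$. Then $u$ is strictly convex on $[0,b)$.
   Context: $n\ge2$ is a fixed integer. *)

From Stdlib Require Import Reals.
From Coquelicot Require Import Coquelicot.
Open Scope R_scope.

Definition in_Ico0 (b : Rbar) (x : R) : Prop := 0 <= x /\ Rbar_lt x b.

(* f' is the derivative of f on [0,b), relative to [0,b): at interior points
   this is the usual two-sided derivative, at x = 0 the right derivative. *)
Definition deriv_on_Ico0 (b : Rbar) (f f' : R -> R) : Prop :=
  forall x, in_Ico0 b x ->
    filterlim (fun y => (f y - f x) / (y - x))
      (within (fun y => in_Ico0 b y /\ y <> x) (locally x))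
      (locally (f' x)).

Definition strictly_convex_on (D : R -> Prop) (f : R -> R) : Prop :=
  forall x y t, D x -> D y -> x <> y -> 0 < t < 1 ->
    f (t * x + (1 - t) * y) < t * f x + (1 - t) * f y.

From Stdlib Require Import Reals Lra Classical.
From Coquelicot Require Import Coquelicot.
Open Scope R_scope.

(* Write c = n - 1 and Q = u^2 - x u u'.  The equation reads
   u u'' = (1 + u'^2) (c - Q / 2), so it suffices to show Q < 2 c on [0, b);
   initially Q(0) = u(0)^2 < 2 c.  Along solutions
   Q' = W := u u' - x u'^2 - x (1 + u'^2) (c - Q / 2), and W(0) = u(0) u'(0) < 0.
   W stays negative: at a first zero z, Q has decreased, so c - Q(z)/2 > 0 and
   u''(z) > 0; W(z) = 0 forces u'(z) > 0, and then
   W'(z) = -2 z u' u'' (1 + c - Q/2) < 0, impossible for a function reaching 0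
   from below.  Hence Q decreases, Q < 2 c, u'' > 0, and u is strictly convex. *)

Definition clamp (a b x : R) : R := Rmin b (Rmax a x).

Lemma clamp_in (a b x : R) : a <= b -> a <= clamp a b x <= b.
Proof. intros; unfold clamp, Rmin, Rmax; repeat destruct Rle_dec; lra. Qed.

Lemma clamp_id (a b x : R) : a <= x <= b -> clamp a b x = x.
Proof. intros; unfold clamp, Rmin, Rmax; repeat destruct Rle_dec; lra. Qed.

Lemma clamp_lipschitz (a b x y : R) : a <= b ->
  Rabs (clamp a b x - clamp a b y) <= Rabs (x - y).
Proof.
  intros; unfold clamp, Rmin, Rmax; repeat destruct Rle_dec;
    unfold Rabs; repeat destruct Rcase_abs; lra.
Qed.

Lemma continuity_pt_clamp (a b x : R) : a <= b -> continuity_pt (clamp a b) x.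
Proof.
  intros Hab eps Heps; exists eps; split; [exact Heps|].
  intros y [_ Hy]; simpl in *; unfold R_dist in *.
  pose proof (clamp_lipschitz a b y x Hab); lra.
Qed.

(* For [a <= b], continuity of [f] relative to [a, b] is encoded as
   continuity of [f] precomposed with the retraction [clamp a b] of R onto
   [a, b]; this makes Stdlib's continuity and mean value lemmas available. *)
Definition continuous_on_Icc (a b : R) (f : R -> R) : Prop :=
  forall x, continuity_pt (fun s => f (clamp a b s)) x.

Lemma continuous_on_IccP (a b : R) (f : R -> R) : a <= b ->
  continuous_on_Icc a b f <->
  forall x, a <= x <= b -> forall eps, 0 < eps -> exists d, 0 < d /\
    forall y, a <= y <= b -> Rabs (y - x) < d -> Rabs (f y - f x) < eps.
Proof.
  intros Hab; split.
  - intros Hf x Hx eps Heps.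
    destruct (Hf x eps Heps) as [d [Hd Hfd]].
    exists d; split; [exact Hd|]; intros y Hy Hyx.
    destruct (Req_dec y x) as [->|Nyx].
    { rewrite Rminus_diag, Rabs_R0; exact Heps. }
    specialize (Hfd y); simpl in Hfd; unfold R_dist in Hfd.
    rewrite (clamp_id a b y), (clamp_id a b x) in Hfd by exact Hy || exact Hx.
    apply Hfd; repeat split; auto.
  - intros Hf x eps Heps.
    pose proof (clamp_in a b x Hab) as Hx.
    destruct (Hf _ Hx eps Heps) as [d [Hd Hfd]].
    exists d; split; [exact Hd|]; intros y [_ Hy]; simpl in *; unfold R_dist in *.
    pose proof (clamp_lipschitz a b y x Hab).
    apply Hfd; [apply clamp_in; exact Hab | lra].
Qed.

Lemma MVT_Icc (f f' : R -> R) (a b : R) : a < b ->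
  (forall x, a < x < b -> derivable_pt_lim f x (f' x)) ->
  continuous_on_Icc a b f ->
  exists c, a < c < b /\ f b - f a = f' c * (b - a).
Proof.
  intros Hab Hd Hc.
  set (g := fun s => f (clamp a b s)).
  assert (Hg : forall x, a < x < b -> derivable_pt_lim g x (f' x)).
  { intros x Hx eps Heps; destruct (Hd x Hx eps Heps) as [d Hfd].
    assert (Hpos : 0 < Rmin d (Rmin (x - a) (b - x))).
    { repeat apply Rmin_pos; try apply cond_pos; lra. }
    exists (mkposreal _ Hpos); intros h Hh0 Hh; cbn [pos] in Hh.
    pose proof (Rmin_l d (Rmin (x - a) (b - x))).
    pose proof (Rmin_l (x - a) (b - x)); pose proof (Rmin_r (x - a) (b - x)).
    pose proof (Rmin_r d (Rmin (x - a) (b - x))).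
    pose proof (Rabs_maj2 h); pose proof (RRle_abs h).
    unfold g; rewrite (clamp_id a b (x + h)), (clamp_id a b x) by lra.
    apply Hfd; [exact Hh0 | lra]. }
  set (pr1 := fun x (P : a < x < b) =>
    exist (fun l => derivable_pt_abs g x l) (f' x) (Hg x P)).
  set (pr2 := fun x (_ : a < x < b) => derivable_pt_id x).
  destruct (MVT g id a b pr1 pr2 Hab (fun x _ => Hc x)
    (fun x _ => derivable_continuous_pt _ _ (derivable_pt_id x))) as [c [P E]].
  exists c; split; [exact P|].
  unfold pr1, pr2 in E; rewrite derive_pt_id in E; simpl in E.
  unfold g, id in E; rewrite (clamp_id a b a), (clamp_id a b b) in E by lra; lra.
Qed.

Lemma derivable_pt_lim_neg_left (g : R -> R) (a z l : R) : a < z ->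
  derivable_pt_lim g z l -> l < 0 -> exists t, a < t < z /\ g z < g t.
Proof.
  intros Haz Hd Hl.
  destruct (Hd (- l / 2) ltac:(lra)) as [d Hgd].
  set (h := - (Rmin d (z - a) / 2)).
  assert (Hm : 0 < Rmin d (z - a)) by (apply Rmin_pos; [apply cond_pos | lra]).
  pose proof (Rmin_l d (z - a)); pose proof (Rmin_r d (z - a)).
  assert (Hh : h < 0) by (unfold h; lra).
  specialize (Hgd h ltac:(lra) ltac:(rewrite Rabs_left by lra; unfold h; lra)).
  exists (z + h); split; [unfold h; lra|].
  pose proof (Rle_abs ((g (z + h) - g z) / h - l)).
  assert (Hq : (g (z + h) - g z) / h < l / 2) by lra.
  apply (Rmult_lt_compat_r (- h)) in Hq; [|lra].
  replace ((g (z + h) - g z) / h * - h) with (- (g (z + h) - g z)) in Hq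
    by (field; lra).
  nra.
Qed.

Lemma first_zero (g : R -> R) (a y : R) : a < y -> continuous_on_Icc a y g ->
  g a < 0 -> 0 <= g y ->
  exists z, a < z <= y /\ g z = 0 /\ forall t, a <= t < z -> g t < 0.
Proof.
  intros Hay Hc Ha Hy.
  pose proof (proj1 (continuous_on_IccP a y g (Rlt_le _ _ Hay)) Hc) as Hcont.
  set (E := fun t => a <= t <= y /\ forall s, a <= s <= t -> g s < 0).
  assert (Ea : E a).
  { split; [lra|]; intros s Hs; replace s with a by lra; exact Ha. }
  assert (Ebound : bound E) by (exists y; intros t [Ht _]; lra).
  destruct (completeness E Ebound (ex_intro _ a Ea)) as [z [Hub Hlub]].
  assert (Haz : a <= z) by (apply Hub; exact Ea).
  assert (Hzy : z <= y) by (apply Hlub; intros t [Ht _]; lra).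
  assert (Hbefore : forall t, a <= t < z -> g t < 0).
  { intros t Ht; destruct (classic (exists e, E e /\ t < e)) as [[e [[_ He] Hte]]|N].
    - apply He; lra.
    - enough (z <= t) by lra.
      apply Hlub; intros e He; apply Rnot_lt_le; intro Hte; apply N; eauto. }
  assert (Hz : g z = 0).
  { destruct (Rtotal_order (g z) 0) as [Hneg|[Hzero|Hpos]]; [exfalso | exact Hzero | exfalso].
    - (* [g] stays negative a little beyond [z], against [z] being the supremum *)
      assert (Hzy' : z < y) by (destruct (Req_dec z y) as [->|]; lra).
      destruct (Hcont z (conj Haz Hzy) (- g z) ltac:(lra)) as [d [Hd Hgd]].
      pose proof (Rmin_l (z + d / 2) y); pose proof (Rmin_r (z + d / 2) y).
      set (t := Rmin (z + d / 2) y) in *.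
      assert (Hzt : z < t) by (unfold t, Rmin; destruct Rle_dec; lra).
      enough (Et : E t) by (pose proof (Hub t Et); lra).
      split; [lra|]; intros s Hs.
      destruct (Rlt_le_dec s z); [apply Hbefore; lra|].
      specialize (Hgd s ltac:(lra) ltac:(rewrite Rabs_right; lra)).
      pose proof (Rle_abs (g s - g z)); lra.
    - (* [g] would already be positive a little before [z] *)
      assert (Haz' : a < z) by (destruct (Req_dec z a) as [->|]; lra).
      destruct (Hcont z (conj Haz Hzy) (g z) Hpos) as [d [Hd Hgd]].
      set (t := z - Rmin d (z - a) / 2).
      assert (0 < Rmin d (z - a)) by (apply Rmin_pos; lra).
      pose proof (Rmin_l d (z - a)); pose proof (Rmin_r d (z - a)).
      specialize (Hgd t ltac:(unfold t; lra) ltac:(rewrite Rabs_left; unfold t; lra)).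
      pose proof (Hbefore t ltac:(unfold t; lra)).
      pose proof (Rabs_maj2 (g t - g z)); lra. }
  exists z; repeat split; auto.
  destruct (Req_dec z a) as [->|]; lra.
Qed.

Lemma in_Ico0_le (b : Rbar) (x y : R) : Rbar_lt y b -> 0 <= x <= y -> in_Ico0 b x.
Proof. intros Hy Hx; split; [lra | exact (Rbar_le_lt_trans x y b (proj2 Hx) Hy)]. Qed.

Lemma Rbar_lt_locally (b : Rbar) (x : R) : Rbar_lt x b ->
  exists d, 0 < d /\ forall y, y < x + d -> Rbar_lt y b.
Proof.
  destruct b as [r| |]; simpl; intros Hx; [| exists 1; split; auto; lra | contradiction].
  exists (r - x); split; intros; lra.
Qed.

Section DerivOnIco0.

Variables (b : Rbar) (f f' : R -> R).
Hypothesis Hf : deriv_on_Ico0 b f f'.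

Lemma deriv_on_Ico0_quotient (x : R) : in_Ico0 b x ->
  forall eps, 0 < eps -> exists d, 0 < d /\ forall y, in_Ico0 b y -> y <> x ->
    Rabs (y - x) < d -> Rabs ((f y - f x) / (y - x) - f' x) < eps.
Proof.
  intros Hx eps Heps.
  destruct (Hf x Hx (ball (f' x) (mkposreal eps Heps)) (locally_ball _ _)) as [d Hd].
  exists d; split; [apply cond_pos|]; intros y Hy Hyx Hyd.
  exact (Hd y Hyd (conj Hy Hyx)).
Qed.

Lemma deriv_on_Ico0_derivable_pt_lim (x : R) : 0 < x -> Rbar_lt x b ->
  derivable_pt_lim f x (f' x).
Proof.
  intros Hx Hxb eps Heps.
  destruct (Rbar_lt_locally b x Hxb) as [d1 [Hd1 Hb1]].
  destruct (deriv_on_Ico0_quotient x (conj (Rlt_le _ _ Hx) Hxb) eps Heps) as [d [Hd Hq]].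
  assert (Hpos : 0 < Rmin d (Rmin d1 x)) by (repeat apply Rmin_pos; lra).
  exists (mkposreal _ Hpos); intros h Hh0 Hh; cbn [pos] in Hh.
  pose proof (Rmin_l d (Rmin d1 x)); pose proof (Rmin_r d (Rmin d1 x)).
  pose proof (Rmin_l d1 x); pose proof (Rmin_r d1 x).
  pose proof (Rabs_maj2 h); pose proof (RRle_abs h).
  assert (Hxh : in_Ico0 b (x + h)) by (split; [lra | apply Hb1; lra]).
  specialize (Hq (x + h) Hxh).
  replace (x + h - x) with h in Hq by ring.
  apply Hq; [lra | lra].
Qed.

Lemma deriv_on_Ico0_continuous_on_Icc (a y : R) : Rbar_lt y b -> 0 <= a <= y ->
  continuous_on_Icc a y f.
Proof.
  intros Hyb Hay; apply continuous_on_IccP; [lra|].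
  intros x Hx eps Heps.
  assert (Hxin : in_Ico0 b x) by (apply (in_Ico0_le b x y Hyb); lra).
  destruct (deriv_on_Ico0_quotient x Hxin 1 Rlt_0_1) as [d1 [Hd1 Hq]].
  set (K := Rabs (f' x) + 1).
  assert (HK : 0 < K) by (unfold K; pose proof (Rabs_pos (f' x)); lra).
  assert (Hpos : 0 < Rmin d1 (eps / K)) by (apply Rmin_pos; [lra | apply Rdiv_lt_0_compat; lra]).
  exists (Rmin d1 (eps / K)); split; [exact Hpos|]; intros t Ht Htx.
  destruct (Req_dec t x) as [->|Ntx].
  { rewrite Rminus_diag, Rabs_R0; exact Heps. }
  pose proof (Rmin_l d1 (eps / K)); pose proof (Rmin_r d1 (eps / K)).
  specialize (Hq t ltac:(apply (in_Ico0_le b t y Hyb); lra) Ntx ltac:(lra)).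
  set (q := (f t - f x) / (t - x)) in *.
  (* the difference quotient stays below [K], so [|f t - f x| < K |t - x|] *)
  assert (Hq' : Rabs q < K).
  { unfold K; replace q with (q - f' x + f' x) by ring.
    pose proof (Rabs_triang (q - f' x) (f' x)); lra. }
  replace (f t - f x) with (q * (t - x)) by (unfold q; field; lra).
  rewrite Rabs_mult.
  assert (eps / K * K = eps) by (field; lra).
  pose proof (Rabs_pos (t - x)); pose proof (Rabs_pos q); nra.
Qed.

Lemma deriv_on_Ico0_MVT (s t : R) : 0 <= s < t -> Rbar_lt t b ->
  exists c, s < c < t /\ f t - f s = f' c * (t - s).
Proof.
  intros Hst Htb; apply MVT_Icc; [lra | | apply (deriv_on_Ico0_continuous_on_Icc s t Htb); lra].
  intros x Hx; apply deriv_on_Ico0_derivable_pt_lim; [lra|].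
  exact (Rbar_le_lt_trans x t b ltac:(simpl; lra) Htb).
Qed.

Lemma deriv_on_Ico0_pos_increasing : (forall x, in_Ico0 b x -> 0 < f' x) ->
  forall s t, in_Ico0 b s -> in_Ico0 b t -> s < t -> f s < f t.
Proof.
  intros Hpos s t [Hs _] [_ Htb] Hst.
  destruct (deriv_on_Ico0_MVT s t (conj Hs Hst) Htb) as [c [Hc Ec]].
  pose proof (Hpos c ltac:(apply (in_Ico0_le b c t Htb); lra)); nra.
Qed.

(* Two mean value steps on [x, m] and [m, y] turn the convexity defect into
   [t (1 - t) (y - x) (f' c2 - f' c1)] with [c1 < m < c2]. *)
Lemma strictly_convex_on_Ico0 :
  (forall s t, in_Ico0 b s -> in_Ico0 b t -> s < t -> f' s < f' t) ->
  strictly_convex_on (in_Ico0 b) f.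
Proof.
  intros Hincr.
  assert (Hlt : forall x y t, in_Ico0 b x -> in_Ico0 b y -> x < y -> 0 < t < 1 ->
    f (t * x + (1 - t) * y) < t * f x + (1 - t) * f y).
  { intros x y t [Hx _] [_ Hyb] Hxy Ht.
    set (m := t * x + (1 - t) * y).
    assert (Hxm : x < m) by (unfold m; nra).
    assert (Hmy : m < y) by (unfold m; nra).
    destruct (deriv_on_Ico0_MVT x m (conj Hx Hxm) (Rbar_le_lt_trans m y b ltac:(simpl; lra) Hyb))
      as [c1 [Hc1 E1]].
    destruct (deriv_on_Ico0_MVT m y ltac:(lra) Hyb) as [c2 [Hc2 E2]].
    assert (Hc12 : f' c1 < f' c2).
    { apply Hincr; [apply (in_Ico0_le b c1 y Hyb) | apply (in_Ico0_le b c2 y Hyb) | ]; lra. }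
    assert (Hdefect : t * f x + (1 - t) * f y - f m = t * (1 - t) * (y - x) * (f' c2 - f' c1)).
    { replace (f x) with (f m - f' c1 * (m - x)) by lra.
      replace (f y) with (f m + f' c2 * (y - m)) by lra.
      unfold m; ring. }
    assert (0 < t * (1 - t) * (y - x) * (f' c2 - f' c1)) by (repeat apply Rmult_lt_0_compat; lra).
    lra. }
  intros x y t Hx Hy Hxy Ht.
  destruct (Rlt_le_dec x y) as [L|L]; [apply Hlt; auto|].
  replace (t * x + (1 - t) * y) with ((1 - t) * y + (1 - (1 - t)) * x) by ring.
  replace (t * f x + (1 - t) * f y) with ((1 - t) * f y + (1 - (1 - t)) * f x) by ring.
  apply Hlt; auto; lra.
Qed.

End DerivOnIco0.

Section ConvexityFromODE.

Variables (b : Rbar) (c : R) (u u1 u2 : R -> R).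
Hypothesis Hu_pos : forall x, in_Ico0 b x -> 0 < u x.
Hypothesis Hu1 : deriv_on_Ico0 b u u1.
Hypothesis Hu2 : deriv_on_Ico0 b u1 u2.
Hypothesis Hode : forall x, in_Ico0 b x ->
  u2 x / (1 + u1 x ^ 2) = x * u1 x / 2 - u x / 2 + c / u x.

Definition Q (x : R) : R := u x ^ 2 - x * u x * u1 x.

Definition W (x : R) : R :=
  u x * u1 x - x * u1 x ^ 2 - x * (1 + u1 x ^ 2) * (c - Q x / 2).

Lemma u_mul_u2 (x : R) : in_Ico0 b x -> u x * u2 x = (1 + u1 x ^ 2) * (c - Q x / 2).
Proof.
  intros Hx; pose proof (Hu_pos x Hx); pose proof (pow2_ge_0 (u1 x)).
  replace (u2 x) with (u2 x / (1 + u1 x ^ 2) * (1 + u1 x ^ 2)) by (field; lra).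
  rewrite (Hode x Hx); unfold Q; field; lra.
Qed.

Lemma u2_pos (x : R) : in_Ico0 b x -> Q x < 2 * c -> 0 < u2 x.
Proof.
  intros Hx HQ; pose proof (u_mul_u2 x Hx); pose proof (Hu_pos x Hx).
  pose proof (pow2_ge_0 (u1 x)); nra.
Qed.

Lemma is_derive_u (x : R) : 0 < x -> Rbar_lt x b -> is_derive u x (u1 x).
Proof. intros; apply is_derive_Reals, (deriv_on_Ico0_derivable_pt_lim b u u1); auto. Qed.

Lemma is_derive_u1 (x : R) : 0 < x -> Rbar_lt x b -> is_derive u1 x (u2 x).
Proof. intros; apply is_derive_Reals, (deriv_on_Ico0_derivable_pt_lim b u1 u2); auto. Qed.

Lemma derivable_pt_lim_Q (x : R) : 0 < x -> Rbar_lt x b -> derivable_pt_lim Q x (W x).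
Proof.
  intros Hx Hxb; apply is_derive_Reals.
  pose proof (is_derive_u x Hx Hxb) as Du; pose proof (is_derive_u1 x Hx Hxb) as Du1.
  pose proof (u_mul_u2 x (conj (Rlt_le _ _ Hx) Hxb)).
  unfold Q; auto_derive.
  - repeat split; eexists; eassumption.
  - replace (Derive (fun y => u y) x) with (u1 x) by (symmetry; exact (is_derive_unique _ _ _ Du)).
    replace (Derive (fun y => u1 y) x) with (u2 x) by (symmetry; exact (is_derive_unique _ _ _ Du1)).
    unfold W, Q in *; nra.
Qed.

Lemma derivable_pt_lim_W (x : R) : 0 < x -> Rbar_lt x b ->
  derivable_pt_lim W x
    (x * (1 + u1 x ^ 2) * W x / 2 - 2 * x * u1 x * u2 x * (1 + (c - Q x / 2))).
Proof.
  intros Hx Hxb; apply is_derive_Reals.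
  pose proof (is_derive_u x Hx Hxb) as Du; pose proof (is_derive_u1 x Hx Hxb) as Du1.
  assert (Hin : in_Ico0 b x) by (split; [lra | exact Hxb]).
  assert (Eu2 : u2 x = (1 + u1 x ^ 2) * (c - Q x / 2) / u x).
  { pose proof (Hu_pos x Hin); rewrite <- (u_mul_u2 x Hin); field; lra. }
  unfold W, Q; auto_derive.
  - repeat split; eexists; eassumption.
  - replace (Derive (fun y => u y) x) with (u1 x) by (symmetry; exact (is_derive_unique _ _ _ Du)).
    replace (Derive (fun y => u1 y) x) with (u2 x) by (symmetry; exact (is_derive_unique _ _ _ Du1)).
    pose proof (Hu_pos x Hin); rewrite Eu2; unfold Q; field; lra.
Qed.

Lemma continuous_on_Icc_Q_W (y : R) : 0 <= y -> Rbar_lt y b ->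
  continuous_on_Icc 0 y Q /\ continuous_on_Icc 0 y W.
Proof.
  intros Hy Hyb.
  pose proof (deriv_on_Ico0_continuous_on_Icc b u u1 Hu1 0 y Hyb ltac:(lra)) as Cu.
  pose proof (deriv_on_Ico0_continuous_on_Icc b u1 u2 Hu2 0 y Hyb ltac:(lra)) as Cu1.
  split; intros x; pose proof (Cu x); pose proof (Cu1 x);
    pose proof (continuity_pt_clamp 0 y x Hy); unfold W, Q;
    repeat first [ assumption | apply continuity_pt_minus | apply continuity_pt_plus
                 | apply continuity_pt_mult | apply continuity_pt_div | apply continuity_pt_pow
                 | apply continuity_pt_const; intros ? ?; reflexivity ].
Qed.

Hypothesis Hb : Rbar_lt 0 b.
Hypothesis HQ0 : Q 0 < 2 * c.
Hypothesis Hu1_0 : u1 0 < 0.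

Lemma Q_lt_Q0 (x : R) : 0 < x -> Rbar_lt x b -> (forall t, 0 < t < x -> W t < 0) ->
  Q x < Q 0.
Proof.
  intros Hx Hxb HW.
  destruct (MVT_Icc Q W 0 x Hx) as [t [Ht Et]].
  - intros t Ht; apply derivable_pt_lim_Q; [lra|].
    exact (Rbar_le_lt_trans t x b ltac:(simpl; lra) Hxb).
  - apply continuous_on_Icc_Q_W; [lra | exact Hxb].
  - pose proof (HW t Ht); nra.
Qed.

Lemma W_zero_u1_pos (z : R) : 0 < z -> Rbar_lt z b -> W z = 0 -> Q z < 2 * c ->
  0 < u1 z.
Proof.
  intros Hz Hzb HWz HQz.
  pose proof (Hu_pos z (conj (Rlt_le _ _ Hz) Hzb)); pose proof (pow2_ge_0 (u1 z)).
  assert (Hpos : 0 < z * (1 + u1 z ^ 2) * (c - Q z / 2)).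
  { apply Rmult_lt_0_compat; [apply Rmult_lt_0_compat|]; lra. }
  unfold W in HWz; nra.
Qed.

Lemma W_neg (x : R) : in_Ico0 b x -> W x < 0.
Proof.
  intros [Hx Hxb]; apply Rnot_le_lt; intros HWx.
  assert (HW0 : W 0 < 0).
  { pose proof (Hu_pos 0 (conj (Rle_refl 0) Hb)); unfold W; nra. }
  assert (Hx' : 0 < x) by (destruct (Req_dec x 0) as [->|]; lra).
  destruct (first_zero W 0 x Hx' (proj2 (continuous_on_Icc_Q_W x Hx Hxb)) HW0 HWx)
    as [z [Hzx [HWz Hbefore]]].
  assert (Hzb : Rbar_lt z b) by exact (Rbar_le_lt_trans z x b ltac:(simpl; lra) Hxb).
  assert (HQz : Q z < 2 * c).
  { enough (Q z < Q 0) by lra.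
    apply Q_lt_Q0; [lra | exact Hzb | intros t Ht; apply Hbefore; lra]. }
  pose proof (W_zero_u1_pos z ltac:(lra) Hzb HWz HQz).
  pose proof (u2_pos z (in_Ico0_le b z x Hxb ltac:(lra)) HQz).
  destruct (derivable_pt_lim_neg_left W 0 z _ ltac:(lra)
    (derivable_pt_lim_W z ltac:(lra) Hzb)) as [t [Ht HWt]].
  - rewrite HWz, Rmult_0_r, Rdiv_0_l, Rminus_0_l.
    assert (0 < z * u1 z * u2 z * (1 + (c - Q z / 2))) by (repeat apply Rmult_lt_0_compat; lra).
    lra.
  - pose proof (Hbefore t ltac:(lra)); lra.
Qed.

Lemma ode_solution_strictly_convex : strictly_convex_on (in_Ico0 b) u.
Proof.
  apply (strictly_convex_on_Ico0 b u u1 Hu1).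
  apply (deriv_on_Ico0_pos_increasing b u1 u2 Hu2).
  intros x Hx; apply (u2_pos x Hx).
  destruct (Req_dec x 0) as [->|Nx0]; [exact HQ0|].
  destruct Hx as [Hx Hxb].
  pose proof (Q_lt_Q0 x ltac:(lra) Hxb (fun t Ht => W_neg t (in_Ico0_le b t x Hxb ltac:(lra)))).
  lra.
Qed.

End ConvexityFromODE.

Theorem lemma2p11 (n : nat) (b : Rbar) (u u1 u2 : R -> R) :
  (2 <= n)%nat ->
  Rbar_lt 0 b ->
  (forall x, in_Ico0 b x -> 0 < u x) ->
  deriv_on_Ico0 b u u1 ->
  deriv_on_Ico0 b u1 u2 ->
  (forall x, in_Ico0 b x ->
     u2 x / (1 + (u1 x) ^ 2) = x * u1 x / 2 - u x / 2 + (INR n - 1) / u x) ->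
  u 0 < sqrt (2 * (INR n - 1)) ->
  u1 0 < 0 ->
  strictly_convex_on (in_Ico0 b) u.
Proof.
  intros Hn Hb Hu Hu1 Hu2 Hode Hu0 Hu1_0.
  apply (ode_solution_strictly_convex b (INR n - 1) u u1 u2 Hu Hu1 Hu2 Hode Hb); [|exact Hu1_0].
  assert (Hc : 0 <= 2 * (INR n - 1)).
  { apply le_INR in Hn; replace (INR 2) with 2 in Hn by (simpl; ring); lra. }
  pose proof (Hu 0 (conj (Rle_refl 0) Hb)).
  pose proof (sqrt_sqrt _ Hc); unfold Q; nra.
Qed.
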